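(* Let $X, Y \subseteq \omega$. If there exists an embedding $f : \mathcal{G}^X \hookrightarrow \mathcal{K}_2^Y$ then every $Z \le_e X$ is $Y$-computable.
   Context: A pca is a set with a partial binary application operation containing distinct $\mathrm{s},\mathrm{k}$ with $\mathrm{k}ab\downarrow=a$, $\mathrm{s}ab\downarrow$, $\mathrm{s}abc\simeq(ac)(bc)$. An embedding of pcas is an injective map $f$ with: if $ab$ is defined then $f(a)f(b)$ is defined and equals $f(ab)$. Scott's graph model: on $\mathcal{P}(\omega)$, $A\cdot B=\{n:\exists u\,(\langle n,u\rangle\in A\wedge D_u\subseteq B)\}$, with $\langle\cdot,\cdot\rangle$ a bijective computable pairing, $\langle 0,0\rangle=0$, and $D_u$ the finite set with canonical code $u$. $\mathcal{G}^X$ is the least class containing $X$ and all c.e. sets and closed under this application (equivalently, all sets $\le_e X$). $Z\le_e X$ means there is a c.e. relation $R$ with $x\in Z\iff\exists u\,(R(x,u)\wedge D_u\subseteq X)$. $\mathcal{K}_2^Y$: elements are the total $Y$-computable functions $g:\omega\to\omega$, with $g\cdot h$ the function $n\mapsto\Phi^{g\oplus h}_{g(0)}(n)$ ($\Phi_e$ the $e$-th Turing functional, $(g\oplus h)(2n)=g(n)$, $(g\oplus h)(2n+1)=h(n)$), defined if and only if this function is total. *)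

From HB Require Import structures.
From mathcomp Require Import all_boot.
Set Implicit Arguments. Unset Strict Implicit. Unset Printing Implicit Defensive.

Definition pair (x y : nat) : nat := ((x + y) * (x + y).+1)./2 + y.

(* Programs for unary partial recursive functionals (with pairing),
   relative to an oracle g : nat -> nat. *)
Inductive prog : Type :=
| PZero | PSucc | PId | PFst | PSnd | POrc
| PPair of prog & prog
| PComp of prog & prog
| PRec of prog & prog
| PMin of prog.

Inductive eval (g : nat -> nat) : prog -> nat -> nat -> Prop :=
| ev_zero x : eval g PZero x 0
| ev_succ x : eval g PSucc x x.+1
| ev_id x : eval g PId x x
| ev_fst x y : eval g PFst (pair x y) x
| ev_snd x y : eval g PSnd (pair x y) y
| ev_orc x : eval g POrc x (g x)
| ev_pair p q x a b : eval g p x a -> eval g q x b -> eval g (PPair p q) x (pair a b)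
| ev_comp p q x y z : eval g q x y -> eval g p y z -> eval g (PComp p q) x z
| ev_rec0 p q a v : eval g p a v -> eval g (PRec p q) (pair a 0) v
| ev_recS p q a k w v : eval g (PRec p q) (pair a k) w ->
    eval g q (pair a (pair k w)) v -> eval g (PRec p q) (pair a k.+1) v
| ev_min p x n : eval g p (pair x n) 0 ->
    (forall m, m < n -> exists v, v <> 0 /\ eval g p (pair x m) v) ->
    eval g (PMin p) x n.

(* Goedel numbering of programs via MathComp's countable structure. *)
Fixpoint tree_of_prog (p : prog) : GenTree.tree nat :=
  match p with
  | PZero => GenTree.Node 0 [::]
  | PSucc => GenTree.Node 1 [::]
  | PId => GenTree.Node 2 [::]
  | PFst => GenTree.Node 3 [::]
  | PSnd => GenTree.Node 4 [::]
  | POrc => GenTree.Node 5 [::]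
  | PPair p q => GenTree.Node 6 [:: tree_of_prog p; tree_of_prog q]
  | PComp p q => GenTree.Node 7 [:: tree_of_prog p; tree_of_prog q]
  | PRec p q => GenTree.Node 8 [:: tree_of_prog p; tree_of_prog q]
  | PMin p => GenTree.Node 9 [:: tree_of_prog p]
  end.

Fixpoint prog_of_tree (t : GenTree.tree nat) : option prog :=
  match t with
  | GenTree.Node 0 [::] => Some PZero
  | GenTree.Node 1 [::] => Some PSucc
  | GenTree.Node 2 [::] => Some PId
  | GenTree.Node 3 [::] => Some PFst
  | GenTree.Node 4 [::] => Some PSnd
  | GenTree.Node 5 [::] => Some POrc
  | GenTree.Node 6 [:: a; b] =>
      match prog_of_tree a, prog_of_tree b with
      | Some p, Some q => Some (PPair p q) | _, _ => None end
  | GenTree.Node 7 [:: a; b] =>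
      match prog_of_tree a, prog_of_tree b with
      | Some p, Some q => Some (PComp p q) | _, _ => None end
  | GenTree.Node 8 [:: a; b] =>
      match prog_of_tree a, prog_of_tree b with
      | Some p, Some q => Some (PRec p q) | _, _ => None end
  | GenTree.Node 9 [:: a] =>
      match prog_of_tree a with Some p => Some (PMin p) | None => None end
  | _ => None
  end.

Lemma tree_of_progK : pcancel tree_of_prog prog_of_tree.
Proof. by elim=> //= p -> // q ->. Qed.

HB.instance Definition _ := PCanIsCountable tree_of_progK.

(* Phi_e : the e-th Turing functional (index e decodes to a program;
   non-codes denote the constant-zero program). *)
Definition Phi (e : nat) : prog :=
  match (unpickle e : option prog) with Some p => p | None => PZero end.

Definition join (g h : nat -> nat) (n : nat) : nat :=
  if odd n then h n./2 else g n./2.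

Definition chi (Y : nat -> bool) (n : nat) : nat := nat_of_bool (Y n).

(* Canonical finite sets: D_u = { i | bit i of u is 1 }. *)
Definition Dmem (u i : nat) : Prop := odd (u %/ 2 ^ i).
Definition Dsub (u : nat) (B : nat -> Prop) : Prop := forall i, Dmem u i -> B i.

(* c.e. sets and relations: domains of (oracle-free) partial recursive functions. *)
Definition ce (A : nat -> Prop) : Prop :=
  exists p, forall n, A n <-> exists v, eval (fun _ => 0) p n v.
Definition ce_rel (R : nat -> nat -> Prop) : Prop :=
  exists p, forall x u, R x u <-> exists v, eval (fun _ => 0) p (pair x u) v.

Definition enum_le (Z : nat -> Prop) (X : nat -> bool) : Prop :=
  exists R, ce_rel R /\ forall x, Z x <-> exists u, R x u /\ Dsub u (fun i => X i).

Definition gapp (A B : nat -> Prop) : nat -> Prop :=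
  fun n => exists u, A (pair n u) /\ Dsub u B.

(* G^X : least class containing X, all c.e. sets, closed under application
   (membership taken up to extensional equality of sets). *)
Inductive GX (X : nat -> bool) : (nat -> Prop) -> Prop :=
| GX_X A : (forall n, A n <-> X n) -> GX X A
| GX_ce A : ce A -> GX X A
| GX_app A B C : GX X B -> GX X C -> (forall n, A n <-> gapp B C n) -> GX X A.

(* Total Y-computable functions (elements of K_2^Y). *)
Definition Ycomputable_fun (Y : nat -> bool) (g : nat -> nat) : Prop :=
  exists p, forall n, eval (chi Y) p n (g n).

Definition Ycomputable_set (Y : nat -> bool) (Z : nat -> Prop) : Prop :=
  exists p, forall n, (Z n -> eval (chi Y) p n 1) /\ (~ Z n -> eval (chi Y) p n 0).

Definition K2app_is (g h k : nat -> nat) : Prop :=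
  forall n, eval (join g h) (Phi (g 0)) n (k n).

(* An embedding of pcas G^X -> K_2^Y (application in G^X is total). *)
Definition pca_embedding (X Y : nat -> bool) (f : (nat -> Prop) -> (nat -> nat)) : Prop :=
  [/\ (forall A, GX X A -> Ycomputable_fun Y (f A)),
      (forall A B, GX X A -> GX X B -> (forall n, f A n = f B n) ->
         forall n, A n <-> B n)
    & (forall A B, GX X A -> GX X B -> K2app_is (f A) (f B) (f (gapp A B)))].

(* The singletons {n} = A^n.{0} (A = [shift_set] is c.e.), Z = C.X (C the c.e.
   relation witnessing Z <=_e X) and W = V.Z (V = [guard_set]) all lie in G^X,
   and W.{n} is omega when n is in Z and empty otherwise.  Through the embedding
   f, f({n+1}) is computed from f({n}) by a fixed Turing functional with oracle
   f(A) (+) f({n}), and f(W.{n}) by one with oracle f(W) (+) f({n}).  A single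
   machine that keeps track of the nesting depth of these oracle calls computes
   n |-> f(W.{n})(y0) from Y, and comparing it with f(omega)(y0) <> f(empty)(y0)
   decides Z. *)

From mathcomp Require Import all_boot zify.
From Stdlib Require Import FunctionalExtensionality PropExtensionality Classical.
Set Implicit Arguments. Unset Strict Implicit.

(** * Cantor pairing *)

Lemma pair_ge x y : x + y <= pair x y.
Proof. rewrite /pair -divn2; nia. Qed.

Definition next_pair (xy : nat * nat) : nat * nat :=
  if xy.1 is x.+1 then (x, xy.2.+1) else (xy.2.+1, 0).

Lemma pair_next_pair x y :
  pair (next_pair (x, y)).1 (next_pair (x, y)).2 = (pair x y).+1.
Proof.
case: x => [|x] /=; rewrite /pair -!divn2.
- rewrite !addn0 add0n.
  have -> : y.+1 * y.+2 = y * y.+1 + y.+1 * 2 by nia.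
  nia.
- have -> : x + y.+1 = x.+1 + y by lia.
  lia.
Qed.

Definition unpair (n : nat) : nat * nat := iter n next_pair (0, 0).
Definition unpair1 (n : nat) : nat := (unpair n).1.
Definition unpair2 (n : nat) : nat := (unpair n).2.

Lemma pair_unpair n : pair (unpair1 n) (unpair2 n) = n.
Proof.
rewrite /unpair1 /unpair2; elim: n => //= n IH; case E: (unpair n) => [x y].
by rewrite pair_next_pair -IH E.
Qed.

Lemma unpair_pair x y : unpair (pair x y) = (x, y).
Proof.
move E: (pair x y) => n; elim: n x y E => [|n IH] x y E.
  by have := pair_ge x y; rewrite E; case: x {E} => //; case: y.
have prev x' y' : pair x' y' = n -> unpair n.+1 = next_pair (x', y').
  by move=> /IH /= ->.
case: y E => [|y] E.
- case: x E => [|x] E; first by rewrite /pair in E.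
  by apply: (prev 0 x); have := pair_next_pair 0 x; rewrite /= E => -[].
- by apply: (prev x.+1 y); have := pair_next_pair x.+1 y; rewrite /= E => -[].
Qed.

Lemma unpair1_pair x y : unpair1 (pair x y) = x.
Proof. by rewrite /unpair1 unpair_pair. Qed.

Lemma unpair2_pair x y : unpair2 (pair x y) = y.
Proof. by rewrite /unpair2 unpair_pair. Qed.

Lemma pair_inj x y x' y' : pair x y = pair x' y' -> x = x' /\ y = y'.
Proof. by move=> e; move: (unpair_pair x y); rewrite e unpair_pair => -[-> ->]. Qed.

Lemma pair_eq0 x y : (pair x y == 0) = (x == 0) && (y == 0).
Proof.
apply/eqP/andP => [e|[/eqP -> /eqP ->]] //.
by have [-> ->] := pair_inj (e : pair x y = pair 0 0).
Qed.

(* Keeps unification from unfolding the unary arithmetic behind these. *)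
Opaque pair unpair1 unpair2.

(** * Programs *)

(* The generated [eval_ind] gives no induction hypothesis for the failed
   searches below the result of [PMin]. *)
Lemma eval_ind_nested (g : nat -> nat) (Q : prog -> nat -> nat -> Prop) :
  (forall x, Q PZero x 0) -> (forall x, Q PSucc x x.+1) -> (forall x, Q PId x x) ->
  (forall x y, Q PFst (pair x y) x) -> (forall x y, Q PSnd (pair x y) y) ->
  (forall x, Q POrc x (g x)) ->
  (forall p q x a b, eval g p x a -> Q p x a -> eval g q x b -> Q q x b ->
     Q (PPair p q) x (pair a b)) ->
  (forall p q x y z, eval g q x y -> Q q x y -> eval g p y z -> Q p y z ->
     Q (PComp p q) x z) ->
  (forall p q a v, eval g p a v -> Q p a v -> Q (PRec p q) (pair a 0) v) ->
  (forall p q a k w v, eval g (PRec p q) (pair a k) w -> Q (PRec p q) (pair a k) w ->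
     eval g q (pair a (pair k w)) v -> Q q (pair a (pair k w)) v ->
     Q (PRec p q) (pair a k.+1) v) ->
  (forall p x n, eval g p (pair x n) 0 -> Q p (pair x n) 0 ->
     (forall m, m < n -> exists v, [/\ v <> 0, eval g p (pair x m) v & Q p (pair x m) v]) ->
     Q (PMin p) x n) ->
  forall p x v, eval g p x v -> Q p x v.
Proof.
move=> hz hs hi hf hsn ho hp hc hr0 hrS hm; fix F 4 => p x v [].
- exact: hz.
- exact: hs.
- exact: hi.
- exact: hf.
- exact: hsn.
- exact: ho.
- by move=> {}p q {}x a b d1 d2; apply: hp (F _ _ _ d1) _ (F _ _ _ d2).
- by move=> {}p q {}x y z d1 d2; apply: hc (F _ _ _ d1) _ (F _ _ _ d2).
- by move=> {}p q a {}v d; apply: hr0 (F _ _ _ d).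
- by move=> {}p q a k w {}v d1 d2; apply: hrS (F _ _ _ d1) _ (F _ _ _ d2).
- move=> {}p {}x n d below; apply: hm (F _ _ _ d) _ => // m lt_mn.
  by case: (below m lt_mn) => w [w_neq0 dw]; exists w; split => //; apply: F.
Qed.

Ltac pair_inj_subst := repeat match goal with
  | H : pair _ _ = pair _ _ |- _ => case: (pair_inj H) => ??; clear H; subst
  | H : _.+1 = _.+1 |- _ => case: H => ?; subst end.

Ltac rewrite_eval_IH := repeat match goal with
  | IH : forall v', eval ?g ?p ?x v' -> _ = v', H : eval ?g ?p ?x _ |- _ =>
      move: (IH _ H) => ?; clear H; subst end.

Lemma eval_det g p x v v' : eval g p x v -> eval g p x v' -> v = v'.
Proof.
move=> d; elim/eval_ind_nested: p x v / d v'.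
- by move=> x v' d; inversion d.
- by move=> x v' d; inversion d.
- by move=> x v' d; inversion d.
- by move=> x y v' d; inversion d; pair_inj_subst.
- by move=> x y v' d; inversion d; pair_inj_subst.
- by move=> x v' d; inversion d.
- by move=> p q x a b _ IHa _ IHb v' d; inversion d; subst; rewrite_eval_IH.
- by move=> p q x y z _ IHy _ IHz v' d; inversion d; subst; rewrite_eval_IH.
- by move=> p q a v _ IH v' d; inversion d; pair_inj_subst; rewrite_eval_IH.
- move=> p q a k w v _ IHw _ IHv v' d; inversion d; pair_inj_subst => //.
  by rewrite_eval_IH.
- move=> p x n _ IHn below v' d.
  inversion d as [| | | | | | | | | | ? ? ? d' below']; subst.
  case: (ltngtP n v') => // lt.
  + by have [w [/eqP w_neq0 /IHn w_eq0]] := below' n lt; rewrite -w_eq0 in w_neq0.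
  + by have [w [w_neq0 _ /(_ _ d') w_eq0]] := below v' lt.
Qed.

(** * Functions computable relative to an oracle *)

Definition computable (O F : nat -> nat) : Prop :=
  exists p, forall x, eval O p x (F x).

Section Computable.
Variable O : nat -> nat.
Implicit Types F G A B C D : nat -> nat.

Lemma computable_ext F G : F =1 G -> computable O F -> computable O G.
Proof. by move=> e [p hp]; exists p => x; rewrite -e. Qed.

Lemma computable_id : computable O id.
Proof. by exists PId => x; constructor. Qed.

Lemma computable_const c : computable O (fun _ => c).
Proof.
elim: c => [|c [p hp]]; first by exists PZero => x; constructor.
by exists (PComp PSucc p) => x; econstructor; [apply: hp | constructor].
Qed.

Lemma computable_comp F G : computable O F -> computable O G ->
  computable O (fun x => F (G x)).
Proof. by move=> [p hp] [q hq]; exists (PComp p q) => x; econstructor. Qed.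

Lemma computable_pair F G : computable O F -> computable O G ->
  computable O (fun x => pair (F x) (G x)).
Proof. by move=> [p hp] [q hq]; exists (PPair p q) => x; constructor. Qed.

Lemma computable_unpair1 F : computable O F -> computable O (fun x => unpair1 (F x)).
Proof.
move=> [p hp]; exists (PComp PFst p) => x; econstructor; first exact: hp.
by rewrite -{1}(pair_unpair (F x)); constructor.
Qed.

Lemma computable_unpair2 F : computable O F -> computable O (fun x => unpair2 (F x)).
Proof.
move=> [p hp]; exists (PComp PSnd p) => x; econstructor; first exact: hp.
by rewrite -{1}(pair_unpair (F x)); constructor.
Qed.

Lemma computable_succ F : computable O F -> computable O (fun x => (F x).+1).
Proof. by move=> [p hp]; exists (PComp PSucc p) => x; econstructor; last constructor. Qed.

Lemma computable_oracle F : computable O F -> computable O (fun x => O (F x)).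
Proof. by move=> [p hp]; exists (PComp POrc p) => x; econstructor; last constructor. Qed.

Lemma computable_iter N (S : nat -> nat -> nat) B :
  computable O N -> computable O B -> computable O (fun p => S (unpair1 p) (unpair2 p)) ->
  computable O (fun x => iter (N x) (S x) (B x)).
Proof.
move=> [pN hN] [pB hB] hS.
have [pS hpS] : computable O (fun t => S (unpair1 t) (unpair2 (unpair2 t))).
  apply: computable_ext (computable_comp hS (computable_pair
    (computable_unpair1 computable_id) (computable_unpair2 (computable_unpair2 computable_id)))).
  by move=> t; rewrite unpair1_pair unpair2_pair.
have rec x k : eval O (PRec pB pS) (pair x k) (iter k (S x) (B x)).
  elim: k => [|k IH] /=; first by constructor.
  by econstructor; first exact: IH; have := hpS (pair x (pair k (iter k (S x) (B x))));
     rewrite !unpair1_pair !unpair2_pair.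
exists (PComp (PRec pB pS) (PPair PId pN)) => x.
by apply: ev_comp _ (rec _ _); do 2?constructor.
Qed.

Lemma computable_if0 C A B : computable O C -> computable O A -> computable O B ->
  computable O (fun x => if C x == 0 then A x else B x).
Proof.
move=> hC hA hB.
have := computable_iter (S := fun x _ => B x) hC hA
  (computable_comp hB (computable_unpair1 computable_id)).
by apply: computable_ext => x; case: (C x) => //= n; elim: n.
Qed.

Lemma computable_pred F : computable O F -> computable O (fun x => (F x).-1).
Proof.
pose step p := pair (unpair2 p) (unpair2 p).+1.
have hstep := computable_unpair2 (computable_unpair2 computable_id).
move=> hF; have := computable_unpair1 (computable_iter (S := fun _ => step) hF
  (computable_const (pair 0 0)) (computable_pair hstep (computable_succ hstep))).
apply: computable_ext => x.
suff -> : forall k, iter k step (pair 0 0) = pair k.-1 k by rewrite unpair1_pair.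
by elim=> //= k ->; rewrite /step unpair2_pair.
Qed.

Lemma computable_sub F G : computable O F -> computable O G ->
  computable O (fun x => F x - G x).
Proof.
move=> hF hG.
have := computable_iter (S := fun _ => predn) hG hF
  (computable_pred (computable_unpair2 computable_id)).
by apply: computable_ext => x; rewrite iter_predn.
Qed.

Lemma computable_add F G : computable O F -> computable O G ->
  computable O (fun x => F x + G x).
Proof.
move=> hF hG.
have := computable_iter (S := fun _ => succn) hG hF
  (computable_succ (computable_unpair2 computable_id)).
by apply: computable_ext => x; rewrite iter_succn.
Qed.

Lemma computable_ifeq C D A B : computable O C -> computable O D ->
  computable O A -> computable O B ->
  computable O (fun x => if C x == D x then A x else B x).
Proof.
move=> hC hD hA hB.
have := computable_if0 (computable_add (computable_sub hC hD) (computable_sub hD hC)) hA hB.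
by apply: computable_ext => x; congr (if _ then _ else _); apply/eqP/eqP; lia.
Qed.

Lemma computable_half_odd F : computable O F ->
  computable O (fun x => pair (F x)./2 (odd (F x))).
Proof.
pose step p := if unpair2 p == 0 then pair (unpair1 p) 1 else pair (unpair1 p).+1 0.
have half := computable_unpair1 (computable_unpair2 computable_id).
move=> hF; have := computable_iter (S := fun _ => step) hF (computable_const (pair 0 0))
  (computable_if0 (computable_unpair2 (computable_unpair2 computable_id))
     (computable_pair half (computable_const 1))
     (computable_pair (computable_succ half) (computable_const 0))).
apply: computable_ext => x; elim: (F x) => //= k ->.
by rewrite /step unpair1_pair unpair2_pair uphalf_half; case: (odd k).
Qed.

Lemma computable_half F : computable O F -> computable O (fun x => (F x)./2).
Proof.
move=> /computable_half_odd/computable_unpair1.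
by apply: computable_ext => x; rewrite unpair1_pair.
Qed.

Lemma computable_ifodd F A B : computable O F -> computable O A -> computable O B ->
  computable O (fun x => if odd (F x) then A x else B x).
Proof.
move=> /computable_half_odd/computable_unpair2 hF hA hB.
have := computable_if0 hF hB hA.
by apply: computable_ext => x; rewrite unpair2_pair; case: (odd (F x)).
Qed.

Lemma computable_exp2 F : computable O F -> computable O (fun x => 2 ^ F x).
Proof.
move=> hF; have := computable_iter (S := fun _ w => w + w) hF (computable_const 1)
  (computable_add (computable_unpair2 computable_id) (computable_unpair2 computable_id)).
by apply: computable_ext => x; elim: (F x) => //= k ->; rewrite expnS; lia.
Qed.

Lemma computable_search T : computable O T -> (forall x, exists t, T (pair x t) = 0) ->
  exists2 mu, computable O mu & forall x, T (pair x (mu x)) = 0.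
Proof.
move=> [pT hT] hex.
have hex' x : exists t, T (pair x t) == 0 by have [t /eqP] := hex x; exists t.
exists (fun x => ex_minn (hex' x)); last by move=> x; case: ex_minnP => t /eqP.
exists (PMin pT) => x; case: ex_minnP => t /eqP Tt tmin.
apply: ev_min => [|m lt_mt]; first by rewrite -Tt.
by exists (T (pair x m)); split=> // /eqP /tmin; rewrite leqNgt lt_mt.
Qed.

End Computable.

Ltac computable_tac := repeat first
  [ assumption | exact: computable_id | exact: computable_const
  | apply: computable_ifeq | apply: computable_ifodd | apply: computable_unpair1
  | apply: computable_unpair2 | apply: computable_pair | apply: computable_succ
  | apply: computable_pred | apply: computable_half | apply: computable_oracle ].

(** * A machine for towers of oracle computations *)

Fixpoint code (p : prog) : nat :=
  match p with
  | PZero => pair 0 0 | PSucc => pair 1 0 | PId => pair 2 0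
  | PFst => pair 3 0 | PSnd => pair 4 0 | POrc => pair 5 0
  | PPair p q => pair 6 (pair (code p) (code q))
  | PComp p q => pair 7 (pair (code p) (code q))
  | PRec p q => pair 8 (pair (code p) (code q))
  | PMin p => pair 9 (code p)
  end.

(* Configurations of a machine running coded programs: [Call md c x K] runs the
   code [c] on [x], and [Ret v K] passes [v] to the stack [K] of frames [K*]
   (nested pairs ending in [0]).  The mode [md] fixes the oracle: [0] is the base
   oracle [O], and [(pair q j).+1] is [join g h_j], where [g] is run by the code
   [q] in mode [0], [h_0] by [ph0] in mode [0] and [h_(j+1)] by [P] in mode
   [(pair pg j).+1]; [level j] starts a computation of [h_j]. *)
Definition Call md c x K := pair 0 (pair md (pair c (pair x K))).
Definition Ret v K := pair 1 (pair v K).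
Definition KPairL md q x := pair 1 (pair md (pair q x)).
Definition KPairR a := pair 2 a.
Definition KComp md p := pair 3 (pair md p).
Definition KRec md q a k := pair 4 (pair md (pair q (pair a k))).
Definition KMin md p x n := pair 5 (pair md (pair p (pair x n))).

Section Machine.
Variables (O : nat -> nat) (pg ph0 P : nat).

Definition level j y K :=
  if j == 0 then Call 0 ph0 y K else Call (pair pg j.-1).+1 P y K.

Definition oracle_step md x K :=
  if md == 0 then Ret (O x) K
  else if odd x then level (unpair2 md.-1) x./2 K
  else Call 0 (unpair1 md.-1) x./2 K.

Definition call_step md c x K :=
  if unpair1 c == 0 then Ret 0 K
  else if unpair1 c == 1 then Ret x.+1 K
  else if unpair1 c == 2 then Ret x K
  else if unpair1 c == 3 then Ret (unpair1 x) K
  else if unpair1 c == 4 then Ret (unpair2 x) K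
  else if unpair1 c == 5 then oracle_step md x K
  else if unpair1 c == 6 then
    Call md (unpair1 (unpair2 c)) x (pair (KPairL md (unpair2 (unpair2 c)) x) K)
  else if unpair1 c == 7 then
    Call md (unpair2 (unpair2 c)) x (pair (KComp md (unpair1 (unpair2 c))) K)
  else if unpair1 c == 8 then
    (if unpair2 x == 0 then Call md (unpair1 (unpair2 c)) (unpair1 x) K
     else Call md c (pair (unpair1 x) (unpair2 x).-1)
            (pair (KRec md (unpair2 (unpair2 c)) (unpair1 x) (unpair2 x).-1) K))
  else Call md (unpair2 c) (pair x 0) (pair (KMin md (unpair2 c) x 0) K).

Definition frame_step v tag d K :=
  if tag == 1 then
    Call (unpair1 d) (unpair1 (unpair2 d)) (unpair2 (unpair2 d)) (pair (KPairR v) K)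
  else if tag == 2 then Ret (pair d v) K
  else if tag == 3 then Call (unpair1 d) (unpair2 d) v K
  else if tag == 4 then
    Call (unpair1 d) (unpair1 (unpair2 d))
      (pair (unpair1 (unpair2 (unpair2 d))) (pair (unpair2 (unpair2 (unpair2 d))) v)) K
  else if v == 0 then Ret (unpair2 (unpair2 (unpair2 d))) K
  else Call (unpair1 d) (unpair1 (unpair2 d))
         (pair (unpair1 (unpair2 (unpair2 d))) (unpair2 (unpair2 (unpair2 d))).+1)
         (pair (KMin (unpair1 d) (unpair1 (unpair2 d)) (unpair1 (unpair2 (unpair2 d)))
                  (unpair2 (unpair2 (unpair2 d))).+1) K).

Definition step s :=
  if unpair1 s == 0 then
    call_step (unpair1 (unpair2 s)) (unpair1 (unpair2 (unpair2 s)))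
      (unpair1 (unpair2 (unpair2 (unpair2 s)))) (unpair2 (unpair2 (unpair2 (unpair2 s))))
  else if unpair2 (unpair2 s) == 0 then s
  else frame_step (unpair1 (unpair2 s)) (unpair1 (unpair1 (unpair2 (unpair2 s))))
         (unpair2 (unpair1 (unpair2 (unpair2 s)))) (unpair2 (unpair2 (unpair2 s))).

Lemma computable_step : computable O step.
Proof.
rewrite /step /call_step /oracle_step /level /frame_step /Call /Ret.
rewrite /KPairL /KPairR /KComp /KRec /KMin.
computable_tac.
Qed.

Ltac reduce_step :=
  rewrite /step /call_step /oracle_step /frame_step /Call /Ret;
  rewrite /KPairL /KPairR /KComp /KRec /KMin;
  repeat (rewrite unpair1_pair || rewrite unpair2_pair); rewrite ?pair_eq0 /=.

Lemma step_zero md x K : step (Call md (code PZero) x K) = Ret 0 K.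
Proof. by reduce_step. Qed.

Lemma step_succ md x K : step (Call md (code PSucc) x K) = Ret x.+1 K.
Proof. by reduce_step. Qed.

Lemma step_id md x K : step (Call md (code PId) x K) = Ret x K.
Proof. by reduce_step. Qed.

Lemma step_fst md x y K : step (Call md (code PFst) (pair x y) K) = Ret x K.
Proof. by reduce_step. Qed.

Lemma step_snd md x y K : step (Call md (code PSnd) (pair x y) K) = Ret y K.
Proof. by reduce_step. Qed.

Lemma step_oracle0 x K : step (Call 0 (code POrc) x K) = Ret (O x) K.
Proof. by reduce_step. Qed.

Lemma step_oracle_join q j x K :
  step (Call (pair q j).+1 (code POrc) x K) =
  if odd x then level j x./2 K else Call 0 q x./2 K.
Proof. by reduce_step. Qed.

Lemma step_pair md p q x K :
  step (Call md (code (PPair p q)) x K) =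
  Call md (code p) x (pair (KPairL md (code q) x) K).
Proof. by reduce_step. Qed.

Lemma step_comp md p q x K :
  step (Call md (code (PComp p q)) x K) =
  Call md (code q) x (pair (KComp md (code p)) K).
Proof. by reduce_step. Qed.

Lemma step_rec0 md p q a K :
  step (Call md (code (PRec p q)) (pair a 0) K) = Call md (code p) a K.
Proof. by reduce_step. Qed.

Lemma step_recS md p q a k K :
  step (Call md (code (PRec p q)) (pair a k.+1) K) =
  Call md (code (PRec p q)) (pair a k) (pair (KRec md (code q) a k) K).
Proof. by reduce_step. Qed.

Lemma step_min md p x K :
  step (Call md (code (PMin p)) x K) =
  Call md (code p) (pair x 0) (pair (KMin md (code p) x 0) K).
Proof. by reduce_step. Qed.

Lemma step_KPairL md q x v K :
  step (Ret v (pair (KPairL md q x) K)) = Call md q x (pair (KPairR v) K).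
Proof. by reduce_step. Qed.

Lemma step_KPairR a v K : step (Ret v (pair (KPairR a) K)) = Ret (pair a v) K.
Proof. by reduce_step. Qed.

Lemma step_KComp md p v K : step (Ret v (pair (KComp md p) K)) = Call md p v K.
Proof. by reduce_step. Qed.

Lemma step_KRec md q a k v K :
  step (Ret v (pair (KRec md q a k) K)) = Call md q (pair a (pair k v)) K.
Proof. by reduce_step. Qed.

Lemma step_KMin md p x n v K :
  step (Ret v (pair (KMin md p x n) K)) =
  if v == 0 then Ret n K else Call md p (pair x n.+1) (pair (KMin md p x n.+1) K).
Proof. by reduce_step; case: (v == 0). Qed.

Lemma step_halt v : step (Ret v 0) = Ret v 0.
Proof. by reduce_step. Qed.

Definition reaches (f : nat -> nat) (s t : nat) : Prop := exists n, iter n f s = t.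

Lemma reaches_refl f s : reaches f s s.
Proof. by exists 0. Qed.

Lemma reaches_trans f s t u : reaches f s t -> reaches f t u -> reaches f s u.
Proof. by move=> [m <-] [n <-]; exists (n + m); rewrite iterD. Qed.

Lemma reaches_step f s t : reaches f (f s) t -> reaches f s t.
Proof. by move=> [n <-]; exists n.+1; rewrite iterSr. Qed.

Lemma step_simulates_eval md (g : nat -> nat) :
  (forall x K, reaches step (Call md (code POrc) x K) (Ret (g x) K)) ->
  forall p x v, eval g p x v -> forall K, reaches step (Call md (code p) x K) (Ret v K).
Proof.
move=> oracle; apply: eval_ind_nested => //.
- by move=> x K; apply: reaches_step; rewrite step_zero; apply: reaches_refl.
- by move=> x K; apply: reaches_step; rewrite step_succ; apply: reaches_refl.
- by move=> x K; apply: reaches_step; rewrite step_id; apply: reaches_refl.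
- by move=> x y K; apply: reaches_step; rewrite step_fst; apply: reaches_refl.
- by move=> x y K; apply: reaches_step; rewrite step_snd; apply: reaches_refl.
- move=> p q x a b _ IHp _ IHq K; apply: reaches_step; rewrite step_pair.
  apply: reaches_trans (IHp _) _; apply: reaches_step; rewrite step_KPairL.
  apply: reaches_trans (IHq _) _; apply: reaches_step; rewrite step_KPairR.
  exact: reaches_refl.
- move=> p q x y z _ IHq _ IHp K; apply: reaches_step; rewrite step_comp.
  by apply: reaches_trans (IHq _) _; apply: reaches_step; rewrite step_KComp.
- by move=> p q a v _ IH K; apply: reaches_step; rewrite step_rec0.
- move=> p q a k w v _ IHrec _ IHq K; apply: reaches_step; rewrite step_recS.
  by apply: reaches_trans (IHrec _) _; apply: reaches_step; rewrite step_KRec.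
- move=> p x n _ IHn below K.
  have search m : m <= n ->
      reaches step (Call md (code (PMin p)) x K)
        (Call md (code p) (pair x m) (pair (KMin md (code p) x m) K)).
    elim: m => [_|m IHm lt_mn].
      by apply: reaches_step; rewrite step_min; apply: reaches_refl.
    apply: reaches_trans (IHm (ltnW lt_mn)) _.
    have [v [/eqP v_neq0 _ IHv]] := below m lt_mn.
    apply: reaches_trans (IHv _) _; apply: reaches_step.
    by rewrite step_KMin (negbTE v_neq0); apply: reaches_refl.
  apply: reaches_trans (search n (leqnn n)) _; apply: reaches_trans (IHn _) _.
  by apply: reaches_step; rewrite step_KMin eqxx; apply: reaches_refl.
Qed.

Lemma reaches_eval_base p x v K :
  eval O p x v -> reaches step (Call 0 (code p) x K) (Ret v K).
Proof.
move=> d; apply: step_simulates_eval d K => y K'.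
by apply: reaches_step; rewrite step_oracle0; apply: reaches_refl.
Qed.

End Machine.

Lemma iter_fixed_unique (f : nat -> nat) s a b m n :
  f a = a -> f b = b -> iter m f s = a -> iter n f s = b -> a = b.
Proof.
wlog le_mn : a b m n / m <= n.
  move=> wlog fa fb ha hb; case: (leqP m n) => [le|/ltnW le]; first exact: wlog ha hb.
  by symmetry; apply: wlog hb ha.
move=> fa _ ha <-; rewrite -(subnK le_mn) iterD ha.
by elim: (n - m) => //= k <-.
Qed.

Lemma computable_of_machine O (stp init r : nat -> nat) :
  computable O stp -> computable O init ->
  (forall v, stp (Ret v 0) = Ret v 0) ->
  (forall n, reaches stp (init n) (Ret (r n) 0)) ->
  computable O r.
Proof.
move=> hstp hinit halt run_r.
pose run z := iter (unpair2 z) stp (init (unpair1 z)).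
have hrun : computable O run.
  exact: (computable_iter (S := fun _ => stp) (computable_unpair2 (computable_id O))
    (computable_comp hinit (computable_unpair1 (computable_id O)))
    (computable_comp hstp (computable_unpair2 (computable_id O)))).
pose result z := unpair1 (unpair2 (run z)).
pose halted z := if run z == Ret (result z) 0 then 0 else 1.
have [mu hmu halted_mu] :
    exists2 mu, computable O mu & forall n, halted (pair n (mu n)) = 0.
  apply: computable_search; first by rewrite /halted /result /Ret; computable_tac.
  move=> n; have [t ht] := run_r n; exists t.
  rewrite /halted /result /run unpair1_pair unpair2_pair ht.
  by rewrite /Ret !unpair2_pair unpair1_pair eqxx.
apply: computable_ext (computable_unpair1 (computable_unpair2
  (computable_comp hrun (computable_pair (computable_id O) hmu)))) => n /=.
move: (halted_mu n); rewrite /halted; case: eqP => // + _.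
rewrite /run unpair1_pair unpair2_pair => run_mu; have [t run_t] := run_r n.
have := iter_fixed_unique (halt _) (halt _) run_mu run_t.
by rewrite run_mu /Ret unpair2_pair unpair1_pair => /pair_inj[_ /pair_inj[-> _]].
Qed.

Lemma computable_oracle_tower O (pg ph0 pw P P' : prog) (g w : nat -> nat)
    (h : nat -> nat -> nat) (r : nat -> nat) (y0 : nat) :
  (forall y, eval O pg y (g y)) -> (forall y, eval O ph0 y (h 0 y)) ->
  (forall y, eval O pw y (w y)) ->
  (forall j y, eval (join g (h j)) P y (h j.+1 y)) ->
  (forall n, eval (join w (h n)) P' y0 (r n)) ->
  computable O r.
Proof.
move=> Hg Hh0 Hw HP HP'.
pose stp := step O (code pg) (code ph0) (code P).
have run_level j y K :
    reaches stp (level (code pg) (code ph0) (code P) j y K) (Ret (h j y) K).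
  elim: j y K => [|j IH] y K; first exact: reaches_eval_base.
  apply: step_simulates_eval (HP j y) K => x K'.
  apply: reaches_step; rewrite step_oracle_join /join.
  by case: (odd x); [apply: IH | apply: reaches_eval_base].
apply: (computable_of_machine (init := fun n => Call (pair (code pw) n).+1 (code P') y0 0)
  (computable_step _ _ _ _) _ (step_halt _ _ _ _)).
- by rewrite /Call; computable_tac.
- move=> n; apply: step_simulates_eval (HP' n) 0 => x K.
  apply: reaches_step; rewrite step_oracle_join /join.
  by case: (odd x); [apply: run_level | apply: reaches_eval_base].
Qed.

(** * Scott's graph model *)

Lemma Dmem_exp2 j i : Dmem (2 ^ j) i <-> i = j.
Proof.
rewrite /Dmem; split => [|->]; last by rewrite divnn expn_gt0.
case: (ltngtP i j) => // lt_ij.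
- by rewrite -(subnK (ltnW lt_ij)) expnD mulnK ?expn_gt0 // -(subnSK lt_ij) expnS oddM.
- by rewrite divn_small ?ltn_exp2l.
Qed.

Lemma Dmem_exists u : 0 < u -> exists i, Dmem u i.
Proof.
move=> u_gt0; exists (trunc_log 2 u); rewrite /Dmem.
have lo := trunc_logP (isT : 1 < 2) u_gt0; have hi := trunc_log_ltn u (isT : 1 < 2).
suff -> : u %/ 2 ^ trunc_log 2 u = 1 by [].
apply/eqP; rewrite eqn_leq -ltnS ltn_divLR ?leq_divRL ?expn_gt0 // mul1n lo andbT.
by rewrite -expnS.
Qed.

Lemma pred_ext (A B : nat -> Prop) : (forall n, A n <-> B n) -> A = B.
Proof.
by move=> AB; apply: functional_extensionality => n; apply: propositional_extensionality.
Qed.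

Lemma ce_eq0 T : computable (fun _ => 0) T -> ce (fun x => T x = 0).
Proof.
move=> [pT hT]; exists (PMin (PComp pT PFst)) => x; split => [Tx0|[n d]].
  exists 0; apply: ev_min => //; apply: (ev_comp (y := x)); first by constructor.
  by have := hT x; rewrite Tx0.
inversion d as [| | | | | | | | | | ? ? ? d' _]; subst.
inversion d' as [| | | | | | | ? ? ? y ? dfst dT | | |]; subst.
inversion dfst; pair_inj_subst; exact: eval_det (hT _) dT.
Qed.

Lemma ce_True : ce (fun _ => True).
Proof. by have := ce_eq0 (computable_const _ 0); congr ce; apply: pred_ext. Qed.

Lemma ce_False : ce (fun _ => False).
Proof. by have := ce_eq0 (computable_const _ 1); congr ce; apply: pred_ext. Qed.

Definition shift_set (x : nat) : Prop :=
  0 < unpair1 x /\ unpair2 x = 2 ^ (unpair1 x).-1.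

Lemma ce_shift_set : ce shift_set.
Proof.
have hT : computable (fun _ => 0) (fun x => if unpair1 x == 0 then 1
    else if unpair2 x == 2 ^ (unpair1 x).-1 then 0 else 1).
  by apply: computable_if0; computable_tac; apply: computable_exp2; computable_tac.
have := ce_eq0 hT; congr ce; apply: pred_ext => x; rewrite /shift_set lt0n.
by case: (unpair1 x =P 0) => _;
  case: (unpair2 x =P 2 ^ (unpair1 x).-1) => e; split=> // -[].
Qed.

Lemma gapp_shift_set B m : gapp shift_set B m <-> 0 < m /\ B m.-1.
Proof.
rewrite /gapp /shift_set; split => [[u []]|[m_gt0 Bm]].
  rewrite unpair1_pair unpair2_pair => -[m_gt0 ->] /(_ m.-1) sub.
  by split; last exact/sub/Dmem_exp2.
by exists (2 ^ m.-1); rewrite unpair1_pair unpair2_pair; split=> // i /Dmem_exp2 ->.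
Qed.

Lemma gapp_shift_singleton n : gapp shift_set (fun x => x = n) = (fun x => x = n.+1).
Proof. by apply: pred_ext => m; rewrite gapp_shift_set; lia. Qed.

Definition guard_set (x : nat) : Prop :=
  0 < unpair2 x /\ unpair2 (unpair1 x) = unpair2 x.

Lemma ce_guard_set : ce guard_set.
Proof.
have hT : computable (fun _ => 0) (fun x => if unpair2 x == 0 then 1
    else if unpair2 (unpair1 x) == unpair2 x then 0 else 1).
  by apply: computable_if0; computable_tac.
have := ce_eq0 hT; congr ce; apply: pred_ext => x; rewrite /guard_set lt0n.
by case: (unpair2 x =P 0) => _;
  case: (unpair2 (unpair1 x) =P unpair2 x) => e; split=> // -[].
Qed.

Lemma gapp_guard_set Z B k : gapp (gapp guard_set Z) B k <-> exists2 i, Z i & B i.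
Proof.
rewrite /gapp /guard_set; split => [[u [[u' []]]]|[i Zi Bi]].
  rewrite !unpair1_pair !unpair2_pair => -[u'_gt0 ->] subZ subB.
  by have [i iu] := Dmem_exists u'_gt0; exists i; [apply: subZ | apply: subB].
exists (2 ^ i); split; last by move=> j /Dmem_exp2 ->.
exists (2 ^ i); rewrite !unpair1_pair !unpair2_pair expn_gt0.
by split=> // j /Dmem_exp2 ->.
Qed.

Lemma gapp_guard_singleton Z n :
  gapp (gapp guard_set Z) (fun x => x = n) = (fun _ => Z n).
Proof.
by apply: pred_ext => k; rewrite gapp_guard_set; split=> [[i Zi <-]|Zn] //; exists n.
Qed.

Lemma GX_singleton X n : GX X (fun x => x = n).
Proof.
elim: n => [|n IH]; first exact/GX_ce/ce_eq0/computable_id.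
by apply: GX_app (GX_ce _ ce_shift_set) IH _ => m; rewrite gapp_shift_singleton.
Qed.

Lemma GX_enum_le X Z : enum_le Z X -> GX X Z.
Proof.
case=> R [[p Rp] HZ].
have GR : GX X (fun x => R (unpair1 x) (unpair2 x)).
  by apply: GX_ce; exists p => x; rewrite Rp pair_unpair.
apply: GX_app GR (GX_X (A := fun n => X n) _) _ => // n.
by rewrite HZ /gapp; split=> -[u hu]; exists u; rewrite ?unpair1_pair ?unpair2_pair in hu *.
Qed.

Lemma pca_embedding_separates X Y f : pca_embedding X Y f ->
  exists y, f (fun _ => True) y <> f (fun _ => False) y.
Proof.
case=> _ f_inj _; apply: NNPP => same.
have ext : f (fun _ => True) =1 f (fun _ => False).
  by move=> y; apply: NNPP => neq; apply: same; exists y.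
by have [/(_ I)] := f_inj _ _ (GX_ce X ce_True) (GX_ce X ce_False) ext 0.
Qed.

Theorem theorem7p13 (X Y : nat -> bool) :
  (exists f : (nat -> Prop) -> (nat -> nat), pca_embedding X Y f) ->
  forall Z : nat -> Prop, enum_le Z X -> Ycomputable_set Y Z.
Proof.
move=> [f emb] Z /GX_enum_le GZ; have [fY _ f_app] := emb.
have GW : GX X (gapp guard_set Z) by apply: GX_app (GX_ce _ ce_guard_set) GZ _.
have [y0 sep] := pca_embedding_separates emb.
have [pA hA] := fY _ (GX_ce _ ce_shift_set).
have [p0 h0] := fY _ (GX_singleton X 0).
have [pW hW] := fY _ GW.
have [pZ hZ] : computable (chi Y) (fun n => f (fun _ => Z n) y0).
  apply: (computable_oracle_tower hA h0 hW (h := fun j => f (fun x => x = j))) => [j y|n].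
    rewrite -gapp_shift_singleton.
    exact: f_app (GX_ce _ ce_shift_set) (GX_singleton X j) y.
  by rewrite -gapp_guard_singleton; apply: f_app GW (GX_singleton X n) y0.
have [pd hd] : computable (chi Y) (fun v => if v == f (fun _ => True) y0 then 1 else 0).
  by computable_tac.
exists (PComp pd pZ) => n; split => [Zn|nZn]; apply: ev_comp (hZ n) _.
- have -> : (fun _ : nat => Z n) = (fun _ => True) by apply: pred_ext.
  by have := hd (f (fun _ => True) y0); rewrite eqxx.
- have -> : (fun _ : nat => Z n) = (fun _ => False) by apply: pred_ext.
  by have := hd (f (fun _ => False) y0); case: eqP => // e; rewrite e in sep.
Qed.
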